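(* Equip $S^1\times D^3$ (coordinates $\theta\in\mathbb{R}/2\pi\mathbb{Z}$, $x=(x_1,x_2,x_3)\in D^3$) with the product of the standard metric on $S^1$ and the flat metric on $D^3$, and write $\alpha_1=d\theta\, dx_1+dx_2\, dx_3$, $\alpha_2=d\theta\, dx_2+dx_3\, dx_1$, $\alpha_3=d\theta\, dx_3+dx_1\, dx_2$. Then there exist self-dual harmonic 2-forms for this metric, vanishing exactly along $S^1\times\{0\}$ with nondegenerate linear part, realizing both types of splittings. Namely: (A) $\omega_A=x_1\alpha_1+x_2\alpha_2-2x_3\alpha_3=*_3\mu+d\theta\wedge\mu$, where $\mu=d\big(\tfrac12(x_1^2+x_2^2)-x_3^2\big)$ and $*_3$ is the Hodge star of the flat metric on $D^3$, is a self-dual harmonic 2-form with $(L_{ij}(\theta))=\mathrm{diag}(1,1,-2)$, whose splitting is the oriented one; (B) for any $0<R<1$, $$\omega_B=(x_1\cos\theta+x_2\sin\theta)e^{x_3}\alpha_1+(x_1\sin\theta-x_2\cos\theta)e^{x_3}\alpha_2+R(-x_1\alpha_1+x_3\alpha_3)$$ is a self-dual harmonic 2-form with $$(L_{ij}(\theta))=\begin{pmatrix}\cos\theta-R&\sin\theta&0\\ \sin\theta&-\cos\theta&0\\ 0&0&R\end{pmatrix},$$ whose splitting is the unoriented one.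
   Context: For a 2-form $\omega=\sum_{i}L_i(\theta,x)\alpha_i+Q$ vanishing on $S^1\times\{0\}$, with $L_i=\sum_j L_{ij}(\theta)x_j$ and $Q$ of order at least two in $x$, the matrix $(L_{ij}(\theta))$ is (for closed $\omega$) symmetric and traceless; when it is nondegenerate, two of its eigenvalues have one sign and the third has the opposite sign for all $\theta$. The associated splitting of $\mathbb{R}^3\times S^1\to S^1$ is into the line bundle spanned by the eigenvector of the eigenvalue of the sign occurring once, and the rank 2 bundle spanned by the other two eigenvectors. The splitting is called oriented if this line bundle is orientable (trivial) and unoriented otherwise. *)

From Stdlib Require Import Reals List.
From Coquelicot Require Import Coquelicot.
Open Scope R_scope.

(* Functions of the coordinates (theta, x1, x2, x3) on R x R^3; a form on
   S^1 x D^3 is represented by its lift, which is required to be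
   2*PI-periodic in theta. *)
Definition fn4 := R -> R -> R -> R -> R.

(* Partial derivative in coordinate k (0 = theta, 1,2,3 = x1,x2,x3). *)
Definition pd (k : nat) (f : fn4) : fn4 :=
  fun a b c d =>
    match k with
    | O => Derive (fun t => f t b c d) a
    | 1%nat => Derive (fun t => f a t c d) b
    | 2%nat => Derive (fun t => f a b t d) c
    | _ => Derive (fun t => f a b c t) d
    end.

Definition ex_pd (k : nat) (f : fn4) (a b c d : R) : Prop :=
  match k with
  | O => ex_derive (fun t => f t b c d) a
  | 1%nat => ex_derive (fun t => f a t c d) b
  | 2%nat => ex_derive (fun t => f a b t d) c
  | _ => ex_derive (fun t => f a b c t) d
  end.

Definition inD3 (x1 x2 x3 : R) : Prop := x1 ^ 2 + x2 ^ 2 + x3 ^ 2 <= 1.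

Definition smooth_fn (f : fn4) : Prop :=
  forall (ks : list nat) (k : nat) th x1 x2 x3, inD3 x1 x2 x3 ->
    ex_pd k (fold_right pd f ks) th x1 x2 x3.

(* A 2-form  c01 dth^dx1 + c02 dth^dx2 + c03 dth^dx3
             + c23 dx2^dx3 + c31 dx3^dx1 + c12 dx1^dx2. *)
Record form2 := mkForm2 {
  c01 : fn4; c02 : fn4; c03 : fn4; c23 : fn4; c31 : fn4; c12 : fn4 }.

Definition components (w : form2) : list fn4 :=
  c01 w :: c02 w :: c03 w :: c23 w :: c31 w :: c12 w :: nil.

(* sum_i f_i alpha_i, with alpha_1 = dth dx1 + dx2 dx3, etc. *)
Definition alpha_comb (f1 f2 f3 : fn4) : form2 := mkForm2 f1 f2 f3 f1 f2 f3.

(* Hodge star of the product metric dth^2 + dx1^2 + dx2^2 + dx3^2,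
   orientation dth dx1 dx2 dx3. *)
Definition hodge (w : form2) : form2 :=
  mkForm2 (c23 w) (c31 w) (c12 w) (c01 w) (c02 w) (c03 w).

Definition periodic_form (w : form2) : Prop :=
  forall f, In f (components w) -> forall th x1 x2 x3, f (th + 2 * PI) x1 x2 x3 = f th x1 x2 x3.

Definition smooth_form (w : form2) : Prop :=
  forall f, In f (components w) -> smooth_fn f.

Definition self_dual (w : form2) : Prop :=
  forall th x1 x2 x3, inD3 x1 x2 x3 ->
    c01 (hodge w) th x1 x2 x3 = c01 w th x1 x2 x3 /\
    c02 (hodge w) th x1 x2 x3 = c02 w th x1 x2 x3 /\
    c03 (hodge w) th x1 x2 x3 = c03 w th x1 x2 x3 /\
    c23 (hodge w) th x1 x2 x3 = c23 w th x1 x2 x3 /\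
    c31 (hodge w) th x1 x2 x3 = c31 w th x1 x2 x3 /\
    c12 (hodge w) th x1 x2 x3 = c12 w th x1 x2 x3.

(* d w = 0 (components dth dx1 dx2, dth dx1 dx3, dth dx2 dx3, dx1 dx2 dx3),
   using c13 = - c31. *)
Definition closed_form (w : form2) : Prop :=
  forall th x1 x2 x3, inD3 x1 x2 x3 ->
    pd 0 (c12 w) th x1 x2 x3 - pd 1 (c02 w) th x1 x2 x3 + pd 2 (c01 w) th x1 x2 x3 = 0 /\
    - pd 0 (c31 w) th x1 x2 x3 - pd 1 (c03 w) th x1 x2 x3 + pd 3 (c01 w) th x1 x2 x3 = 0 /\
    pd 0 (c23 w) th x1 x2 x3 - pd 2 (c03 w) th x1 x2 x3 + pd 3 (c02 w) th x1 x2 x3 = 0 /\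
    pd 1 (c23 w) th x1 x2 x3 + pd 2 (c31 w) th x1 x2 x3 + pd 3 (c12 w) th x1 x2 x3 = 0.

Definition harmonic (w : form2) : Prop := closed_form w /\ closed_form (hodge w).

Definition vanishes_exactly_on_core (w : form2) : Prop :=
  forall th x1 x2 x3, inD3 x1 x2 x3 ->
    ((forall f, In f (components w) -> f th x1 x2 x3 = 0) <->
     (x1 = 0 /\ x2 = 0 /\ x3 = 0)).

Definition mat3 := nat -> nat -> R.
Definition vec3 := nat -> R.

Definition det3 (M : mat3) : R :=
  M 0%nat 0%nat * (M 1%nat 1%nat * M 2%nat 2%nat - M 1%nat 2%nat * M 2%nat 1%nat)
  - M 0%nat 1%nat * (M 1%nat 0%nat * M 2%nat 2%nat - M 1%nat 2%nat * M 2%nat 0%nat)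
  + M 0%nat 2%nat * (M 1%nat 0%nat * M 2%nat 1%nat - M 1%nat 1%nat * M 2%nat 0%nat).

(* Coefficient f_i of alpha_i (i = 0,1,2 for alpha_1, alpha_2, alpha_3)
   of a self-dual form  w = sum_i f_i alpha_i. *)
Definition coef (w : form2) (i : nat) : fn4 :=
  match i with O => c01 w | 1%nat => c02 w | _ => c03 w end.

(* Linear part: L_i = sum_j L_ij(th) x_j, i.e. L_ij(th) = d f_i / d x_j at x = 0. *)
Definition Lmat (w : form2) (th : R) : mat3 :=
  fun i j => pd (S j) (coef w i) th 0 0 0.

Definition nondegenerate_linear_part (w : form2) : Prop :=
  forall th, det3 (Lmat w th) <> 0.

Definition mv (M : mat3) (v : vec3) (i : nat) : R :=
  M i 0%nat * v 0%nat + M i 1%nat * v 1%nat + M i 2%nat * v 2%nat.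

Definition nonzero3 (v : vec3) : Prop := v 0%nat <> 0 \/ v 1%nat <> 0 \/ v 2%nat <> 0.

Definition eigpair (M : mat3) (lam : R) (v : vec3) : Prop :=
  nonzero3 v /\ forall i, (i < 3)%nat -> mv M v i = lam * v i.

Definition det3cols (u v w : vec3) : R :=
  det3 (fun i j => match j with O => u i | 1%nat => v i | _ => w i end).

(* lam is the eigenvalue whose sign occurs once, with eigenvector v:
   there is an eigenbasis v, w1, w2 where w1, w2 have eigenvalues of the
   opposite sign. *)
Definition single_sign_eig (M : mat3) (lam : R) (v : vec3) : Prop :=
  eigpair M lam v /\
  exists mu1 mu2 (w1 w2 : vec3),
    eigpair M mu1 w1 /\ eigpair M mu2 w2 /\ mu1 * lam < 0 /\ mu2 * lam < 0 /\
    det3cols v w1 w2 <> 0.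

Definition splitting_defined (L : R -> mat3) : Prop :=
  forall th, exists lam v, single_sign_eig (L th) lam v.

(* The line bundle over S^1 = R/2piZ is trivial: it has a continuous,
   nowhere-vanishing, 2pi-periodic section. *)
Definition line_bundle_trivial (L : R -> mat3) : Prop :=
  exists v : R -> vec3,
    (forall i, (i < 3)%nat -> continuity (fun t => v t i)) /\
    (forall t i, v (t + 2 * PI) i = v t i) /\
    (forall t, exists lam, single_sign_eig (L t) lam (v t)).

Definition oriented_splitting (L : R -> mat3) : Prop :=
  splitting_defined L /\ line_bundle_trivial L.

Definition unoriented_splitting (L : R -> mat3) : Prop :=
  splitting_defined L /\ ~ line_bundle_trivial L.

Definition good_form (w : form2) : Prop :=
  periodic_form w /\ smooth_form w /\ self_dual w /\ harmonic w /\
  vanishes_exactly_on_core w /\ nondegenerate_linear_part w.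

Definition omegaA : form2 :=
  alpha_comb (fun _ x1 _ _ => x1) (fun _ _ x2 _ => x2) (fun _ _ _ x3 => -2 * x3).

Definition muA_pot : fn4 := fun _ x1 x2 x3 => (x1 ^ 2 + x2 ^ 2) / 2 - x3 ^ 2.

(* *_3 (dg) + dth ^ dg for g a function of x only. *)
Definition star3_plus_dth (g : fn4) : form2 :=
  mkForm2 (pd 1 g) (pd 2 g) (pd 3 g) (pd 1 g) (pd 2 g) (pd 3 g).

Definition LA (th : R) : mat3 :=
  fun i j => match i, j with
             | O, O => 1 | 1%nat, 1%nat => 1 | 2%nat, 2%nat => -2 | _, _ => 0 end.

Definition omegaB (Rr : R) : form2 :=
  alpha_comb
    (fun th x1 x2 x3 => (x1 * cos th + x2 * sin th) * exp x3 - Rr * x1)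
    (fun th x1 x2 x3 => (x1 * sin th - x2 * cos th) * exp x3)
    (fun _ _ _ x3 => Rr * x3).

Definition LB (Rr : R) (th : R) : mat3 :=
  fun i j => match i, j with
             | O, O => cos th - Rr | O, 1%nat => sin th
             | 1%nat, O => sin th | 1%nat, 1%nat => - cos th
             | 2%nat, 2%nat => Rr | _, _ => 0 end.

From Stdlib Require Import Reals List Lra Lia Psatz FunctionalExtensionality.
From Coquelicot Require Import Coquelicot.
Open Scope R_scope.

(* Both forms are f1 alpha1 + f2 alpha2 + f3 alpha3, and such forms are self-dual, so
   harmonicity reduces to closedness; the coefficients are built from the coordinates,
   constants, sin, cos and exp, so every partial derivative is computed symbolically.
   For A the linear part is diag(1, 1, -2) and the distinguished eigenline is the constant
   x3-axis.  For B it is diag(B(th), R) with B(th) = [[cos th - R, sin th], [sin th, -cos th]],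
   det B(th) = R cos th - 1 < 0 < R, so the distinguished eigenvalue is the negative
   eigenvalue of B(th).  Its eigenline is the x2-axis at th = 0 and the x1-axis at th = pi,
   and it lies in {x1 x2 <= 0} for th in [0, pi] and in {x1 x2 >= 0} for th in [pi, 2 pi].
   A continuous nonvanishing section would then keep the sign of x2 - x1 on [0, pi] and of
   x1 + x2 on [pi, 2 pi], which is incompatible with returning to its value at 0. *)

(** * Symbolic partial derivatives *)

Inductive expr :=
  | ECst (r : R) | EVar (j : nat) | EAdd (e1 e2 : expr) | EMul (e1 e2 : expr)
  | EOpp (e : expr) | ESin (e : expr) | ECos (e : expr) | EExp (e : expr).

Fixpoint eval (e : expr) (x0 x1 x2 x3 : R) : R :=
  match e with
  | ECst r => r
  | EVar j => match j with O => x0 | 1%nat => x1 | 2%nat => x2 | _ => x3 end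
  | EAdd e1 e2 => eval e1 x0 x1 x2 x3 + eval e2 x0 x1 x2 x3
  | EMul e1 e2 => eval e1 x0 x1 x2 x3 * eval e2 x0 x1 x2 x3
  | EOpp e => - eval e x0 x1 x2 x3
  | ESin e => sin (eval e x0 x1 x2 x3)
  | ECos e => cos (eval e x0 x1 x2 x3)
  | EExp e => exp (eval e x0 x1 x2 x3)
  end.

(* As in [pd], every index k >= 3 stands for the coordinate x3. *)
Definition coord_index (k : nat) : nat :=
  match k with O => O | 1%nat => 1%nat | 2%nat => 2%nat | _ => 3%nat end.

Fixpoint deriv (k : nat) (e : expr) : expr :=
  match e with
  | ECst _ => ECst 0
  | EVar j => ECst (if Nat.eqb (coord_index j) (coord_index k) then 1 else 0)
  | EAdd e1 e2 => EAdd (deriv k e1) (deriv k e2)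
  | EMul e1 e2 => EAdd (EMul (deriv k e1) e2) (EMul e1 (deriv k e2))
  | EOpp e => EOpp (deriv k e)
  | ESin e => EMul (ECos e) (deriv k e)
  | ECos e => EMul (EOpp (ESin e)) (deriv k e)
  | EExp e => EMul (EExp e) (deriv k e)
  end.

Definition slot (k i : nat) (t x : R) : R := if Nat.eqb (coord_index k) i then t else x.

Lemma derivable_pt_lim_eval e k x0 x1 x2 x3 t :
  derivable_pt_lim
    (fun s => eval e (slot k 0 s x0) (slot k 1 s x1) (slot k 2 s x2) (slot k 3 s x3)) t
    (eval (deriv k e) (slot k 0 t x0) (slot k 1 t x1) (slot k 2 t x2) (slot k 3 t x3)).
Proof.
  induction e as [r|j|e1 IH1 e2 IH2|e1 IH1 e2 IH2|e IH|e IH|e IH|e IH]; simpl.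
  - apply derivable_pt_lim_const.
  - destruct j as [|[|[|j]]], k as [|[|[|k]]]; simpl;
      first [apply derivable_pt_lim_id | apply derivable_pt_lim_const].
  - exact (derivable_pt_lim_plus _ _ _ _ _ IH1 IH2).
  - exact (derivable_pt_lim_mult _ _ _ _ _ IH1 IH2).
  - exact (derivable_pt_lim_opp _ _ _ IH).
  - exact (derivable_pt_lim_comp _ sin _ _ _ IH (derivable_pt_lim_sin _)).
  - exact (derivable_pt_lim_comp _ cos _ _ _ IH (derivable_pt_lim_cos _)).
  - exact (derivable_pt_lim_comp _ exp _ _ _ IH (derivable_pt_lim_exp _)).
Qed.

Lemma is_derive_eval e k x0 x1 x2 x3 :
  is_derive
    (fun t => eval e (slot k 0 t x0) (slot k 1 t x1) (slot k 2 t x2) (slot k 3 t x3))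
    (eval (EVar k) x0 x1 x2 x3) (eval (deriv k e) x0 x1 x2 x3).
Proof.
  apply is_derive_Reals.
  destruct k as [|[|[|k]]]; exact (derivable_pt_lim_eval e _ x0 x1 x2 x3 _).
Qed.

Definition denotes (e : expr) (f : fn4) : Prop :=
  forall x0 x1 x2 x3, f x0 x1 x2 x3 = eval e x0 x1 x2 x3.

Lemma pd_denotes e f k : denotes e f -> denotes (deriv k e) (pd k f).
Proof.
  intros Hf x0 x1 x2 x3.
  transitivity
    (Derive (fun t => f (slot k 0 t x0) (slot k 1 t x1) (slot k 2 t x2) (slot k 3 t x3))
       (eval (EVar k) x0 x1 x2 x3)).
  { destruct k as [|[|[|k]]]; reflexivity. }
  erewrite Derive_ext; [|intros; apply Hf].
  apply is_derive_unique, is_derive_eval.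
Qed.

Lemma pd_eval e k x0 x1 x2 x3 : pd k (eval e) x0 x1 x2 x3 = eval (deriv k e) x0 x1 x2 x3.
Proof. exact (pd_denotes e (eval e) k (fun _ _ _ _ => eq_refl) x0 x1 x2 x3). Qed.

Lemma ex_pd_denotes e f k x0 x1 x2 x3 : denotes e f -> ex_pd k f x0 x1 x2 x3.
Proof.
  intros Hf.
  enough (ex_derive (fun t => f (slot k 0 t x0) (slot k 1 t x1) (slot k 2 t x2) (slot k 3 t x3))
            (eval (EVar k) x0 x1 x2 x3)) as H by (destruct k as [|[|[|k]]]; exact H).
  eapply ex_derive_ext; [intros; symmetry; apply Hf|].
  eexists; apply is_derive_eval.
Qed.

Lemma smooth_fn_denotes e f : denotes e f -> smooth_fn f.
Proof.
  intros Hf ks k th x1 x2 x3 _.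
  apply (ex_pd_denotes (fold_right deriv e ks)).
  induction ks as [|k' ks IH]; [exact Hf | exact (pd_denotes _ _ k' IH)].
Qed.

(** * Forms f1 alpha1 + f2 alpha2 + f3 alpha3 *)

Definition periodic_fn (f : fn4) : Prop :=
  forall th x1 x2 x3, f (th + 2 * PI) x1 x2 x3 = f th x1 x2 x3.

Section AlphaCombination.

Variables f1 f2 f3 : fn4.

Lemma in_components_alpha_comb f :
  In f (components (alpha_comb f1 f2 f3)) -> f = f1 \/ f = f2 \/ f = f3.
Proof. simpl; intuition. Qed.

Lemma periodic_alpha_comb :
  periodic_fn f1 -> periodic_fn f2 -> periodic_fn f3 -> periodic_form (alpha_comb f1 f2 f3).
Proof.
  intros H1 H2 H3 f Hf.
  destruct (in_components_alpha_comb f Hf) as [-> | [-> | ->]]; assumption.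
Qed.

Lemma smooth_alpha_comb :
  smooth_fn f1 -> smooth_fn f2 -> smooth_fn f3 -> smooth_form (alpha_comb f1 f2 f3).
Proof.
  intros H1 H2 H3 f Hf.
  destruct (in_components_alpha_comb f Hf) as [-> | [-> | ->]]; assumption.
Qed.

Lemma self_dual_alpha_comb : self_dual (alpha_comb f1 f2 f3).
Proof. repeat split. Qed.

Lemma harmonic_alpha_comb : closed_form (alpha_comb f1 f2 f3) -> harmonic (alpha_comb f1 f2 f3).
Proof. intros H; split; exact H. Qed.

Lemma vanishes_alpha_comb :
  (forall th x1 x2 x3, inD3 x1 x2 x3 ->
     (f1 th x1 x2 x3 = 0 /\ f2 th x1 x2 x3 = 0 /\ f3 th x1 x2 x3 = 0 <->
      x1 = 0 /\ x2 = 0 /\ x3 = 0)) ->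
  vanishes_exactly_on_core (alpha_comb f1 f2 f3).
Proof.
  intros H th x1 x2 x3 Hx; rewrite <- (H th x1 x2 x3 Hx); split.
  - intros Hz; repeat split; apply Hz; simpl; auto.
  - intros (Z1 & Z2 & Z3) f Hf.
    destruct (in_components_alpha_comb f Hf) as [-> | [-> | ->]]; assumption.
Qed.

End AlphaCombination.

Lemma good_form_alpha_comb_eval e1 e2 e3 :
  periodic_fn (eval e1) -> periodic_fn (eval e2) -> periodic_fn (eval e3) ->
  closed_form (alpha_comb (eval e1) (eval e2) (eval e3)) ->
  (forall th x1 x2 x3, inD3 x1 x2 x3 ->
     (eval e1 th x1 x2 x3 = 0 /\ eval e2 th x1 x2 x3 = 0 /\ eval e3 th x1 x2 x3 = 0 <->
      x1 = 0 /\ x2 = 0 /\ x3 = 0)) ->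
  nondegenerate_linear_part (alpha_comb (eval e1) (eval e2) (eval e3)) ->
  good_form (alpha_comb (eval e1) (eval e2) (eval e3)).
Proof.
  intros P1 P2 P3 Hclosed Hzero Hnondeg.
  repeat apply conj; auto using periodic_alpha_comb, self_dual_alpha_comb,
    harmonic_alpha_comb, vanishes_alpha_comb.
  apply smooth_alpha_comb; apply (smooth_fn_denotes _ _ (fun _ _ _ _ => eq_refl)).
Qed.

(** * Linear parts *)

(* Entries of [Lmat] with an index >= 3 are junk, so matrices are compared on indices < 3. *)
Definition mx_eq3 (M N : mat3) : Prop :=
  forall i j, (i < 3)%nat -> (j < 3)%nat -> M i j = N i j.

Lemma det3_eq3 M N : mx_eq3 M N -> det3 M = det3 N.
Proof. intros H; unfold det3; rewrite !H by lia; reflexivity. Qed.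

Lemma single_sign_eig_eq3 M N : mx_eq3 M N ->
  forall lam v, single_sign_eig M lam v <-> single_sign_eig N lam v.
Proof.
  intros H.
  assert (Heig : forall lam v, eigpair M lam v <-> eigpair N lam v).
  { intros lam v; unfold eigpair, mv.
    split; intros [Hv He]; split; auto; intros i Hi; rewrite <- (He i Hi), ?H by lia; auto. }
  intros lam v; unfold single_sign_eig; setoid_rewrite Heig; reflexivity.
Qed.

Section MatrixFamilies.

Variables L L' : R -> mat3.
Hypothesis eq_LL' : forall t, mx_eq3 (L t) (L' t).

Let single_sign_eig_LL' t lam v : single_sign_eig (L t) lam v <-> single_sign_eig (L' t) lam v :=
  single_sign_eig_eq3 _ _ (eq_LL' t) lam v.

Lemma oriented_splitting_eq3 : oriented_splitting L' -> oriented_splitting L.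
Proof.
  unfold oriented_splitting, splitting_defined, line_bundle_trivial.
  setoid_rewrite single_sign_eig_LL'; auto.
Qed.

Lemma unoriented_splitting_eq3 : unoriented_splitting L' -> unoriented_splitting L.
Proof.
  unfold unoriented_splitting, splitting_defined, line_bundle_trivial.
  setoid_rewrite single_sign_eig_LL'; auto.
Qed.

End MatrixFamilies.

Lemma quadratic_opposite_sign_roots t D : D < 0 ->
  exists lam mu, lam < 0 < mu /\ lam * lam - t * lam + D = 0 /\ mu * mu - t * mu + D = 0.
Proof.
  intros HD.
  set (S := sqrt (t * t - 4 * D)).
  assert (HS2 : S * S = t * t - 4 * D) by (apply sqrt_sqrt; nra).
  assert (HS : 0 <= S) by apply sqrt_pos.
  exists ((t - S) / 2), ((t + S) / 2); repeat split; nra.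
Qed.

Lemma quadratic_neg_root_unique t D x y : D < 0 ->
  x * x - t * x + D = 0 -> y * y - t * y + D = 0 -> x < 0 -> y < 0 -> x = y.
Proof.
  intros HD Hx Hy Hx0 Hy0.
  assert (Hxy : (x - y) * (x + y - t) = 0) by lra.
  destruct (Rmult_integral _ _ Hxy) as [H|H]; [lra|].
  (* otherwise x and y are the two roots, whose product D is negative *)
  assert (x * y = D) by (replace y with (t - x) by lra; lra).
  nra.
Qed.

Section Symmetric2.

Variables a b d : R.

Definition sym2_eigvec (mu p q : R) : Prop :=
  (p <> 0 \/ q <> 0) /\ a * p + b * q = mu * p /\ b * p + d * q = mu * q.

Lemma sym2_eigvec_char mu p q : sym2_eigvec mu p q -> mu * mu - (a + d) * mu + (a * d - b * b) = 0.
Proof.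
  intros [Hpq [E1 E2]].
  set (chi := (a - mu) * (d - mu) - b * b).
  assert (Hp : chi * p = 0).
  { replace (chi * p) with ((d - mu) * (a * p + b * q - mu * p) - b * (b * p + d * q - mu * q))
      by (unfold chi; ring).
    rewrite E1, E2; ring. }
  assert (Hq : chi * q = 0).
  { replace (chi * q) with ((a - mu) * (b * p + d * q - mu * q) - b * (a * p + b * q - mu * p))
      by (unfold chi; ring).
    rewrite E1, E2; ring. }
  assert (chi = 0).
  { destruct Hpq as [H|H]; [apply (Rmult_eq_reg_r p) | apply (Rmult_eq_reg_r q)]; lra. }
  unfold chi in *; lra.
Qed.

Lemma sym2_eigvec_exists mu : a * d - b * b < 0 ->
  mu * mu - (a + d) * mu + (a * d - b * b) = 0 -> exists p q, sym2_eigvec mu p q.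
Proof.
  intros Hdet Hmu.
  destruct (Req_dec b 0) as [Hb|Hb].
  - assert (Hroot : (mu - a) * (mu - d) = 0) by (rewrite Hb in Hmu; lra).
    destruct (Rmult_integral _ _ Hroot).
    + exists 1, 0; repeat split; [left; lra | nra | nra].
    + exists 0, 1; repeat split; [right; lra | nra | nra].
  - exists b, (mu - a); repeat split; [left; exact Hb | ring | nra].
Qed.

Lemma sym2_eigvec_parallel mu p1 q1 p2 q2 : a * d - b * b < 0 ->
  sym2_eigvec mu p1 q1 -> sym2_eigvec mu p2 q2 -> p1 * q2 - q1 * p2 = 0.
Proof.
  intros Hdet [_ [A1 B1]] [_ [A2 B2]].
  set (cr := p1 * q2 - q1 * p2).
  (* a nonzero cr would make the block the scalar matrix mu, of determinant mu^2 >= 0 *)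
  assert (Ha : (a - mu) * cr = 0).
  { replace ((a - mu) * cr) with
      (q2 * (a * p1 + b * q1 - mu * p1) - q1 * (a * p2 + b * q2 - mu * p2))
      by (unfold cr; ring).
    rewrite A1, A2; ring. }
  assert (Hb : b * cr = 0).
  { replace (b * cr) with
      (p1 * (a * p2 + b * q2 - mu * p2) - p2 * (a * p1 + b * q1 - mu * p1))
      by (unfold cr; ring).
    rewrite A1, A2; ring. }
  assert (Hd : (d - mu) * cr = 0).
  { replace ((d - mu) * cr) with
      (p1 * (b * p2 + d * q2 - mu * q2) - p2 * (b * p1 + d * q1 - mu * q1))
      by (unfold cr; ring).
    rewrite B1, B2; ring. }
  destruct (Req_dec cr 0) as [|Hcr]; [assumption|].
  apply Rmult_integral in Ha, Hb, Hd.
  destruct Ha, Hb, Hd; try contradiction.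
  nra.
Qed.

Lemma sym2_eigvec_independent lam mu p1 q1 p2 q2 : lam <> mu ->
  sym2_eigvec lam p1 q1 -> sym2_eigvec mu p2 q2 -> p1 * q2 - q1 * p2 <> 0.
Proof.
  intros Hne [N1 [A1 B1]] [N2 [A2 B2]] Hcr.
  assert (Hdot : (lam - mu) * (p1 * p2 + q1 * q2) = 0).
  { replace ((lam - mu) * (p1 * p2 + q1 * q2)) with
      (p2 * (lam * p1 - (a * p1 + b * q1)) + q2 * (lam * q1 - (b * p1 + d * q1))
       - p1 * (mu * p2 - (a * p2 + b * q2)) - q1 * (mu * q2 - (b * p2 + d * q2))) by ring.
    rewrite <- A1, <- B1, <- A2, <- B2; ring. }
  assert (Horth : p1 * p2 + q1 * q2 = 0).
  { destruct (Rmult_integral _ _ Hdot); [lra | assumption]. }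
  assert (Hlag : (p1 * p1 + q1 * q1) * (p2 * p2 + q2 * q2) = 0).
  { replace ((p1 * p1 + q1 * q1) * (p2 * p2 + q2 * q2)) with
      ((p1 * p2 + q1 * q2) ^ 2 + (p1 * q2 - q1 * p2) ^ 2) by ring.
    rewrite Horth, Hcr; ring. }
  destruct (Rmult_integral _ _ Hlag); destruct N1, N2; nra.
Qed.

Lemma sym2_small_eigvec_sign lam p q : 2 * lam < a + d ->
  a * p + b * q = lam * p -> b * p + d * q = lam * q ->
  b * (p * q) <= 0 /\ (b = 0 -> p * q = 0).
Proof.
  intros Hlam E1 E2.
  (* (lam - d) + (lam - a) < 0, so one of the two expressions for b p q is nonpositive *)
  assert (G1 : b * (p * q) = (lam - d) * (q * q)).
  { replace (b * (p * q)) with (q * (b * p + d * q) - d * (q * q)) by ring. rewrite E2; ring. }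
  assert (G2 : b * (p * q) = (lam - a) * (p * p)).
  { replace (b * (p * q)) with (p * (a * p + b * q) - a * (p * p)) by ring. rewrite E1; ring. }
  split.
  - destruct (Rle_dec (lam - d) 0); nra.
  - intros Hb; rewrite Hb in G1, G2.
    destruct (Req_dec p 0) as [->|Hp]; [ring|].
    destruct (Req_dec q 0) as [->|Hq]; [ring|].
    assert (lam - d = 0).
    { apply (Rmult_eq_reg_r (q * q)); [lra | apply Rmult_integral_contrapositive; tauto]. }
    assert (lam - a = 0).
    { apply (Rmult_eq_reg_r (p * p)); [lra | apply Rmult_integral_contrapositive; tauto]. }
    lra.
Qed.

End Symmetric2.

Definition mkvec3 (x y z : R) : vec3 :=
  fun i => match i with O => x | 1%nat => y | _ => z end.

Definition sym_blockdiag (a b d r : R) : mat3 :=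
  fun i j => match i, j with
             | O, O => a | O, 1%nat => b
             | 1%nat, O => b | 1%nat, 1%nat => d
             | 2%nat, 2%nat => r | _, _ => 0 end.

Lemma det3_sym_blockdiag a b d r : det3 (sym_blockdiag a b d r) = r * (a * d - b * b).
Proof. unfold det3; simpl; ring. Qed.

Lemma eigpair_sym_blockdiag a b d r mu w :
  eigpair (sym_blockdiag a b d r) mu w <->
  nonzero3 w /\ a * w 0%nat + b * w 1%nat = mu * w 0%nat /\
  b * w 0%nat + d * w 1%nat = mu * w 1%nat /\ r * w 2%nat = mu * w 2%nat.
Proof.
  unfold eigpair, mv, sym_blockdiag; split.
  - intros [Hw He].
    pose proof (He 0%nat ltac:(lia)); pose proof (He 1%nat ltac:(lia));
      pose proof (He 2%nat ltac:(lia)); simpl in *.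
    repeat split; auto; lra.
  - intros (Hw & E0 & E1 & E2); split; [exact Hw|].
    intros [|[|[|i]]] Hi; simpl; lra || lia.
Qed.

Lemma det3cols_planar (v w1 w2 : vec3) : w1 2%nat = 0 -> w2 2%nat = 0 ->
  det3cols v w1 w2 = v 2%nat * (w1 0%nat * w2 1%nat - w1 1%nat * w2 0%nat).
Proof. intros H1 H2; unfold det3cols, det3; simpl; rewrite H1, H2; ring. Qed.

Lemma single_sign_eig_diag a d r : a * r < 0 -> d * r < 0 ->
  single_sign_eig (sym_blockdiag a 0 d r) r (mkvec3 0 0 1).
Proof.
  intros Ha Hd; split.
  - apply eigpair_sym_blockdiag; unfold nonzero3; simpl; repeat split; [right; right | ..]; lra.
  - exists a, d, (mkvec3 1 0 0), (mkvec3 0 1 0); repeat split;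
      try (apply eigpair_sym_blockdiag; unfold nonzero3; simpl; repeat split); try lra.
    + left; simpl; lra.
    + right; left; simpl; lra.
    + unfold det3cols, det3; simpl; lra.
Qed.

Lemma oriented_splitting_diag a d r : a * r < 0 -> d * r < 0 ->
  oriented_splitting (fun _ => sym_blockdiag a 0 d r).
Proof.
  intros Ha Hd; split.
  - intros _; exists r, (mkvec3 0 0 1); exact (single_sign_eig_diag a d r Ha Hd).
  - exists (fun _ => mkvec3 0 0 1); repeat split.
    + intros i _; apply continuity_const; intros x y; reflexivity.
    + intros _; exists r; exact (single_sign_eig_diag a d r Ha Hd).
Qed.

Section BlockDiagonal.

Variables a b d r : R.
Hypothesis det_neg : a * d - b * b < 0.
Hypothesis r_pos : 0 < r.

Lemma eigpair_sym_blockdiag_planar mu w : eigpair (sym_blockdiag a b d r) mu w -> mu <> r ->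
  w 2%nat = 0 /\ sym2_eigvec a b d mu (w 0%nat) (w 1%nat).
Proof.
  intros Hw Hmu; apply eigpair_sym_blockdiag in Hw as (Hnz & E0 & E1 & E2).
  assert (Hw2 : w 2%nat = 0).
  { apply (Rmult_eq_reg_l (r - mu)); lra. }
  split; [exact Hw2|]; repeat split; [|exact E0 | exact E1].
  destruct Hnz as [|[|]]; tauto.
Qed.

Lemma single_sign_eig_sym_blockdiag lam v : single_sign_eig (sym_blockdiag a b d r) lam v ->
  lam < 0 /\ 2 * lam < a + d /\ sym2_eigvec a b d lam (v 0%nat) (v 1%nat).
Proof.
  intros [Hv (mu1 & mu2 & w1 & w2 & Hw1 & Hw2 & H1 & H2 & Hdet)].
  assert (Hlam : lam < 0).
  { destruct (Rtotal_order lam 0) as [|[->|Hpos]]; [assumption | lra | exfalso].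
    (* w1, w2 would be planar eigenvectors for the one negative eigenvalue of the block *)
    assert (Hmu1 : mu1 < 0) by nra. assert (Hmu2 : mu2 < 0) by nra.
    destruct (eigpair_sym_blockdiag_planar mu1 w1 Hw1 ltac:(lra)) as [Z1 E1].
    destruct (eigpair_sym_blockdiag_planar mu2 w2 Hw2 ltac:(lra)) as [Z2 E2].
    assert (mu1 = mu2) as <-.
    { apply (quadratic_neg_root_unique (a + d) (a * d - b * b)); auto;
        eapply sym2_eigvec_char; eassumption. }
    apply Hdet; rewrite det3cols_planar, (sym2_eigvec_parallel a b d mu1) by eassumption; ring. }
  destruct (eigpair_sym_blockdiag_planar lam v Hv ltac:(lra)) as [_ E].
  pose proof (sym2_eigvec_char _ _ _ _ _ _ E) as Hchar.
  split; [exact Hlam | split; [nra | exact E]].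
Qed.

Lemma sym_blockdiag_single_sign_eig : exists lam v, single_sign_eig (sym_blockdiag a b d r) lam v.
Proof.
  destruct (quadratic_opposite_sign_roots (a + d) (a * d - b * b) det_neg)
    as (lam & mu & [Hlam Hmu] & Rlam & Rmu).
  destruct (sym2_eigvec_exists a b d lam det_neg ltac:(lra)) as (p1 & q1 & E1).
  destruct (sym2_eigvec_exists a b d mu det_neg ltac:(lra)) as (p2 & q2 & E2).
  pose proof (sym2_eigvec_independent a b d lam mu p1 q1 p2 q2 ltac:(lra) E1 E2) as Hind.
  destruct E1 as (N1 & A1 & B1), E2 as (N2 & A2 & B2).
  exists lam, (mkvec3 p1 q1 0); split.
  - apply eigpair_sym_blockdiag; unfold nonzero3; simpl; repeat split; auto; [tauto | ring].
  - exists mu, r, (mkvec3 p2 q2 0), (mkvec3 0 0 1).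
    split; [|split; [|split; [nra | split; [nra|]]]].
    + apply eigpair_sym_blockdiag; unfold nonzero3; simpl; repeat split; auto; [tauto | ring].
    + apply eigpair_sym_blockdiag; unfold nonzero3; simpl.
      repeat split; [right; right; lra | ring ..].
    + unfold det3cols, det3; simpl; intro H; apply Hind; lra.
Qed.

End BlockDiagonal.

(** * A non-orientability criterion *)

Lemma nonvanishing_same_sign (h : R -> R) a b : continuity h -> a <= b ->
  (forall t, a <= t <= b -> h t <> 0) -> 0 < h a * h b.
Proof.
  intros Hc Hab Hnz; apply Rnot_le_lt; intro Hle.
  destruct (IVT_cor h a b Hc Hab Hle) as (z & Hz & Hz0).
  exact (Hnz z Hz Hz0).
Qed.

Lemma quadrant_path_not_closed (p q : R -> R) a b c :
  continuity p -> continuity q -> a < b < c ->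
  (forall t, p t <> 0 \/ q t <> 0) ->
  (forall t, a <= t <= b -> p t * q t <= 0) ->
  (forall t, b <= t <= c -> 0 <= p t * q t) ->
  p a = 0 -> q b = 0 -> p c = p a -> q c = q a -> False.
Proof.
  intros Hp Hq Habc Hnz Hab Hbc Pa Qb Pc Qc.
  assert (Hdiff : 0 < (q a - p a) * (q b - p b)).
  { apply (nonvanishing_same_sign (fun t => q t - p t));
      [exact (continuity_minus q p Hq Hp) | lra |].
    intros t Ht E; specialize (Hab t Ht); destruct (Hnz t) as [H|H]; apply H; nra. }
  assert (Hsum : 0 < (p b + q b) * (p c + q c)).
  { apply (nonvanishing_same_sign (fun t => p t + q t));
      [exact (continuity_plus p q Hp Hq) | lra |].
    intros t Ht E; specialize (Hbc t Ht); destruct (Hnz t) as [H|H]; apply H; nra. }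
  rewrite Pc, Qc, Pa, Qb in *; nra.
Qed.

(** * Example A *)

Definition eA1 : expr := EVar 1.
Definition eA2 : expr := EVar 2.
Definition eA3 : expr := EMul (ECst (-2)) (EVar 3).

Lemma omegaA_expr : omegaA = alpha_comb (eval eA1) (eval eA2) (eval eA3).
Proof. reflexivity. Qed.

Lemma closed_omegaA : closed_form omegaA.
Proof.
  rewrite omegaA_expr; intros th x1 x2 x3 _.
  cbn [alpha_comb c01 c02 c03 c23 c31 c12]; rewrite !pd_eval; simpl; repeat split; ring.
Qed.

Lemma Lmat_omegaA th : mx_eq3 (Lmat omegaA th) (LA th).
Proof.
  rewrite omegaA_expr; intros [|[|[|i]]] [|[|[|j]]] Hi Hj; try lia;
    unfold Lmat; cbn [coef alpha_comb c01 c02 c03]; rewrite pd_eval; simpl; ring.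
Qed.

Lemma LA_blockdiag th : mx_eq3 (LA th) (sym_blockdiag 1 0 1 (-2)).
Proof. intros [|[|[|i]]] [|[|[|j]]] Hi Hj; reflexivity || lia. Qed.

Lemma good_form_omegaA : good_form omegaA.
Proof.
  assert (Hnondeg : nondegenerate_linear_part omegaA).
  { intros th; rewrite (det3_eq3 _ _ (Lmat_omegaA th)), (det3_eq3 _ _ (LA_blockdiag th)),
      det3_sym_blockdiag; lra. }
  pose proof closed_omegaA as Hclosed.
  rewrite omegaA_expr in *; apply good_form_alpha_comb_eval; auto;
    try (intros th x1 x2 x3; reflexivity).
  intros th x1 x2 x3 _; simpl; lra.
Qed.

Definition eMu : expr :=
  EAdd (EMul (ECst (/ 2)) (EAdd (EMul (EVar 1) (EVar 1)) (EMul (EVar 2) (EVar 2))))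
       (EOpp (EMul (EVar 3) (EVar 3))).

Lemma omegaA_potential : star3_plus_dth muA_pot = omegaA.
Proof.
  assert (Hmu : denotes eMu muA_pot) by (intros th x1 x2 x3; unfold muA_pot; simpl; field).
  unfold star3_plus_dth, omegaA, alpha_comb; f_equal;
    extensionality th; extensionality x1; extensionality x2; extensionality x3;
    rewrite (pd_denotes _ _ _ Hmu); simpl; field.
Qed.

Lemma oriented_splitting_LA : oriented_splitting LA.
Proof.
  apply (oriented_splitting_eq3 _ _ LA_blockdiag), oriented_splitting_diag; lra.
Qed.

(** * Example B *)

Definition eB1 (Rr : R) : expr :=
  EAdd (EMul (EAdd (EMul (EVar 1) (ECos (EVar 0))) (EMul (EVar 2) (ESin (EVar 0))))
             (EExp (EVar 3)))
       (EOpp (EMul (ECst Rr) (EVar 1))).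
Definition eB2 : expr :=
  EMul (EAdd (EMul (EVar 1) (ESin (EVar 0))) (EOpp (EMul (EVar 2) (ECos (EVar 0)))))
       (EExp (EVar 3)).
Definition eB3 (Rr : R) : expr := EMul (ECst Rr) (EVar 3).

Lemma omegaB_expr Rr : omegaB Rr = alpha_comb (eval (eB1 Rr)) (eval eB2) (eval (eB3 Rr)).
Proof. reflexivity. Qed.

Lemma closed_omegaB Rr : closed_form (omegaB Rr).
Proof.
  rewrite omegaB_expr; intros th x1 x2 x3 _.
  cbn [alpha_comb c01 c02 c03 c23 c31 c12]; rewrite !pd_eval; simpl; repeat split; ring.
Qed.

Lemma Lmat_omegaB Rr th : mx_eq3 (Lmat (omegaB Rr) th) (LB Rr th).
Proof.
  rewrite omegaB_expr; intros [|[|[|i]]] [|[|[|j]]] Hi Hj; try lia;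
    unfold Lmat; cbn [coef alpha_comb c01 c02 c03]; rewrite pd_eval; simpl; rewrite ?exp_0; ring.
Qed.

Lemma LB_blockdiag Rr th : LB Rr th = sym_blockdiag (cos th - Rr) (sin th) (- cos th) Rr.
Proof. reflexivity. Qed.

Lemma sin_sq_add_cos_sq th : sin th * sin th + cos th * cos th = 1.
Proof. pose proof (sin2_cos2 th) as H; unfold Rsqr in H; exact H. Qed.

Section ExampleB.

Variable Rr : R.
Hypothesis Rr_range : 0 < Rr < 1.

Lemma LB_block_det_neg th : (cos th - Rr) * - cos th - sin th * sin th < 0.
Proof. pose proof (sin_sq_add_cos_sq th); pose proof (COS_bound th); nra. Qed.

Lemma omegaB_coeffs_zero_iff th x1 x2 x3 :
  eval (eB1 Rr) th x1 x2 x3 = 0 /\ eval eB2 th x1 x2 x3 = 0 /\ eval (eB3 Rr) th x1 x2 x3 = 0 <->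
  x1 = 0 /\ x2 = 0 /\ x3 = 0.
Proof.
  simpl; split.
  - intros (E1 & E2 & E3).
    assert (X3 : x3 = 0) by nra; subst x3; rewrite exp_0 in E1, E2.
    (* the reflection (x1, x2) |-> (x1 c + x2 s, x1 s - x2 c) would map (x1, x2) to (Rr x1, 0) *)
    assert (Hnorm : x1 * x1 + x2 * x2 = Rr * Rr * (x1 * x1)).
    { transitivity ((x1 * cos th + x2 * sin th) ^ 2 + (x1 * sin th - x2 * cos th) ^ 2).
      - rewrite <- (Rmult_1_r (x1 * x1 + x2 * x2)), <- (sin_sq_add_cos_sq th); ring.
      - replace (x1 * cos th + x2 * sin th) with (Rr * x1) by lra.
        replace (x1 * sin th - x2 * cos th) with 0 by lra; ring. }
    assert (Hc : 0 < 1 - Rr * Rr) by nra.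
    pose proof (Rle_0_sqr x1); pose proof (Rle_0_sqr x2); unfold Rsqr in *.
    assert (Hx1 : x1 * x1 = 0) by nra.
    assert (Hx2 : x2 * x2 = 0) by nra.
    apply Rmult_integral in Hx1, Hx2; intuition.
  - intros (-> & -> & ->); rewrite exp_0; repeat split; ring.
Qed.

Lemma good_form_omegaB : good_form (omegaB Rr).
Proof.
  assert (Hnondeg : nondegenerate_linear_part (omegaB Rr)).
  { intros th; rewrite (det3_eq3 _ _ (Lmat_omegaB Rr th)), LB_blockdiag, det3_sym_blockdiag.
    pose proof (LB_block_det_neg th); nra. }
  pose proof (closed_omegaB Rr) as Hclosed.
  rewrite omegaB_expr in *; apply good_form_alpha_comb_eval; auto.
  1-3: intros th x1 x2 x3; simpl; rewrite ?cos_plus, ?sin_plus, ?cos_2PI, ?sin_2PI; ring.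
  intros th x1 x2 x3 _; apply omegaB_coeffs_zero_iff.
Qed.

Lemma single_sign_eig_LB th lam v : single_sign_eig (LB Rr th) lam v ->
  lam < 0 /\ 2 * lam < - Rr /\
  sym2_eigvec (cos th - Rr) (sin th) (- cos th) lam (v 0%nat) (v 1%nat).
Proof.
  rewrite LB_blockdiag; intros Hv.
  destruct (single_sign_eig_sym_blockdiag _ _ _ _ (LB_block_det_neg th) (proj1 Rr_range) lam v Hv)
    as (Hlam & Htr & E).
  split; [exact Hlam | split; [lra | exact E]].
Qed.

Lemma not_line_bundle_trivial_LB : ~ line_bundle_trivial (LB Rr).
Proof.
  intros (v & Hcont & Hper & Hsec).
  assert (Heig : forall t, exists lam, lam < 0 /\ 2 * lam < - Rr /\
                   sym2_eigvec (cos t - Rr) (sin t) (- cos t) lam (v t 0%nat) (v t 1%nat)).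
  { intros t; destruct (Hsec t) as [lam Hv]; exists lam.
    exact (single_sign_eig_LB t lam (v t) Hv). }
  assert (Hsign : forall t, sin t * (v t 0%nat * v t 1%nat) <= 0 /\
                            (sin t = 0 -> v t 0%nat * v t 1%nat = 0)).
  { intros t; destruct (Heig t) as (lam & _ & Htr & _ & E1 & E2).
    apply (sym2_small_eigvec_sign (cos t - Rr) _ (- cos t) lam); [lra | exact E1 | exact E2]. }
  pose proof PI_RGT_0.
  apply (quadrant_path_not_closed (fun t => v t 0%nat) (fun t => v t 1%nat) 0 PI (2 * PI));
    try (apply Hcont; lia); try lra.
  - intros t; destruct (Heig t) as (lam & _ & _ & N & _); exact N.
  - intros t Ht; pose proof (sin_ge_0 t (proj1 Ht) (proj2 Ht)); destruct (Hsign t) as [S Z].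
    destruct (Req_dec (sin t) 0); [rewrite Z by assumption | nra]; lra.
  - intros t Ht; pose proof (sin_le_0 t (proj1 Ht) (proj2 Ht)); destruct (Hsign t) as [S Z].
    destruct (Req_dec (sin t) 0); [rewrite Z by assumption | nra]; lra.
  - destruct (Heig 0) as (lam & Hlam & _ & _ & E & _).
    rewrite cos_0, sin_0 in E; nra.
  - destruct (Heig PI) as (lam & Hlam & _ & _ & _ & E).
    rewrite cos_PI, sin_PI in E; nra.
  - rewrite <- (Hper 0 0%nat); f_equal; ring.
  - rewrite <- (Hper 0 1%nat); f_equal; ring.
Qed.

Lemma unoriented_splitting_LB : unoriented_splitting (LB Rr).
Proof.
  split; [|exact not_line_bundle_trivial_LB].
  intros th; rewrite LB_blockdiag.
  exact (sym_blockdiag_single_sign_eig _ _ _ _ (LB_block_det_neg th) (proj1 Rr_range)).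
Qed.

End ExampleB.

Theorem mainTheorem5 :
  (good_form omegaA /\
   (forall th x1 x2 x3, inD3 x1 x2 x3 ->
      c01 omegaA th x1 x2 x3 = c01 (star3_plus_dth muA_pot) th x1 x2 x3 /\
      c02 omegaA th x1 x2 x3 = c02 (star3_plus_dth muA_pot) th x1 x2 x3 /\
      c03 omegaA th x1 x2 x3 = c03 (star3_plus_dth muA_pot) th x1 x2 x3 /\
      c23 omegaA th x1 x2 x3 = c23 (star3_plus_dth muA_pot) th x1 x2 x3 /\
      c31 omegaA th x1 x2 x3 = c31 (star3_plus_dth muA_pot) th x1 x2 x3 /\
      c12 omegaA th x1 x2 x3 = c12 (star3_plus_dth muA_pot) th x1 x2 x3) /\
   (forall th i j, (i < 3)%nat -> (j < 3)%nat -> Lmat omegaA th i j = LA th i j) /\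
   oriented_splitting (Lmat omegaA)) /\
  (forall Rr, 0 < Rr < 1 ->
   good_form (omegaB Rr) /\
   (forall th i j, (i < 3)%nat -> (j < 3)%nat -> Lmat (omegaB Rr) th i j = LB Rr th i j) /\
   unoriented_splitting (Lmat (omegaB Rr))).
Proof.
  split.
  - split; [exact good_form_omegaA|].
    split; [intros; rewrite omegaA_potential; repeat split|].
    split; [exact Lmat_omegaA|].
    exact (oriented_splitting_eq3 _ _ Lmat_omegaA oriented_splitting_LA).
  - intros Rr HR.
    split; [exact (good_form_omegaB Rr HR)|].
    split; [exact (Lmat_omegaB Rr)|].
    exact (unoriented_splitting_eq3 _ _ (Lmat_omegaB Rr) (unoriented_splitting_LB Rr HR)).
Qed.
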